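(* Let $n \geq 3$, let $V_k$ denote the volume of the unit $k$-sphere in $\mathbb{R}^{k+1}$, and let $$K_n = \frac{\left(P_{n-3}(1)+\left(1-\frac{1}{3^{n-2}}\right)\left(P_{n-2}(1)+\log\left(\frac{3}{4}\right)\right)\right)2^{n-2}V_{n-2}V_{n-3}\Gamma(\frac{n}{2})^2}{(n-2)^2V_{n-1}\Gamma(n)}.$$ Then $$K_n \geq \left(\frac{2\pi e}{n-1}\right)^{\frac{n-1}{2}}\left(\frac{3\left(P_{n-3}(1)+\left(1-\frac{1}{3^{n-2}}\right)\left(P_{n-2}(1)+\log\left(\frac{3}{4}\right)\right)\right)}{2^{\frac{3}{2}}e^{\frac52}(n-2)} \right).$$
   Context: For $k \geq 1$, $P_k(1) = 1+\frac12+\cdots+\frac1k$ (the $k$-th harmonic number), and $P_0(1)=0$. *)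

From Stdlib Require Import Reals.
From Coquelicot Require Import Coquelicot.
Open Scope R_scope.

Definition Gamma (s : R) : R :=
  RInt_gen (fun t => Rpower t (s - 1) * exp (- t)) (at_right 0) (Rbar_locally p_infty).

Fixpoint P1 (k : nat) : R :=
  match k with
  | O => 0
  | S j => P1 j + / INR (S j)
  end.

(* V_k: volume (surface area) of the unit k-sphere in R^(k+1),
   V_k = 2 pi^((k+1)/2) / Gamma((k+1)/2). *)
Definition Vsph (k : nat) : R :=
  2 * Rpower PI (INR (k + 1) / 2) / Gamma (INR (k + 1) / 2).

Definition Qn (n : nat) : R :=
  P1 (n - 3) + (1 - / 3 ^ (n - 2)) * (P1 (n - 2) + ln (3 / 4)).

Definition Kn (n : nat) : R :=
  Qn n * 2 ^ (n - 2) * Vsph (n - 2) * Vsph (n - 3) * (Gamma (INR n / 2)) ^ 2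
  / ((INR n - 2) ^ 2 * Vsph (n - 1) * Gamma (INR n)).

(* Put m = (n - 1) / 2.  The duplication formula
   Gamma m * Gamma (m + 1/2) = 2 ^ (1 - 2 m) * sqrt PI * Gamma (2 m)
   turns K_n into Q_n * PI ^ (m - 1/2) * Gamma (m + 1/2) / (2 m (n - 2) Gamma m ^ 2), so the
   theorem becomes the Stirling-type bound
   Gamma (m + 1/2) / (m (e / m) ^ m Gamma m ^ 2) >= 3 sqrt PI / (sqrt 2 e ^ (5/2))
   for half-integers m >= 1.  When m grows by 1 the left side is multiplied by
   (1 + 1/(2m)) (1 + 1/m) ^ m / e >= 1, so only m = 1 and m = 3/2 need to be checked.
   The values of Gamma at half-integers come from Gamma (s + 1) = s Gamma s (integration by
   parts), Gamma 1 = 1 and Gamma (1/2) = sqrt PI.  The last one is the Gaussian integral: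
   (int_0^x exp (- u^2) du) ^ 2 + int_0^1 exp (- x^2 (1 + t^2)) / (1 + t^2) dt has derivative 0,
   equals PI / 4 at x = 0, and its second term vanishes as x -> oo. *)

From Stdlib Require Import Reals Lra Lia.
From Coquelicot Require Import Coquelicot.
Open Scope R_scope.

(** * Limits of t ^ s * exp (- t) *)

Lemma filterlim_exp_m_infty {T : Type} {F : (T -> Prop) -> Prop} {FF : Filter F}
  (g : T -> R) :
  filterlim g F (Rbar_locally m_infty) -> filterlim (fun t => exp (g t)) F (locally 0).
Proof. intros Hg. exact (filterlim_comp _ _ _ g exp F _ _ Hg is_lim_exp_m). Qed.

Lemma filterlim_scal_m_infty {T : Type} {F : (T -> Prop) -> Prop} {FF : Filter F}
  (f : T -> R) (s : R) :
  0 < s -> filterlim f F (Rbar_locally m_infty) ->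
  filterlim (fun t => s * f t) F (Rbar_locally m_infty).
Proof.
  intros Hs Hf P [M HM]; unfold filtermap.
  apply (filter_imp (fun t => f t < M / s)).
  - intros t Ht. apply HM. apply (Rmult_lt_compat_l s) in Ht; [|exact Hs].
    replace (s * (M / s)) with M in Ht by (field; lra). exact Ht.
  - apply (Hf (fun y => y < M / s)). exists (M / s). auto.
Qed.

Lemma Rpower_mul_exp_opp s t : Rpower t s * exp (- t) = exp (s * ln t - t).
Proof. unfold Rpower. rewrite <- exp_plus. reflexivity. Qed.

Lemma Rpower_mul_exp_opp_lim_0 s :
  0 < s -> filterlim (fun t => Rpower t s * exp (- t)) (at_right 0) (locally 0).
Proof.
  intros Hs.
  apply filterlim_ext_loc with (fun t => exp (s * ln t - t)).
  { apply filter_forall. intros t. symmetry. apply Rpower_mul_exp_opp. }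
  apply filterlim_exp_m_infty.
  apply filterlim_le_m_infty with (fun t => s * ln t).
  - exists (mkposreal 1 Rlt_0_1). intros t _ Ht. simpl. lra.
  - apply filterlim_scal_m_infty; [exact Hs | exact is_lim_ln_0].
Qed.

Lemma Rpower_mul_exp_opp_lim_p_infty s :
  filterlim (fun t => Rpower t s * exp (- t)) (Rbar_locally p_infty) (locally 0).
Proof.
  apply filterlim_ext_loc with (fun t => exp (t * (s * (ln t / t) - 1))).
  { exists 0. intros t Ht. rewrite Rpower_mul_exp_opp. f_equal. field. lra. }
  apply filterlim_exp_m_infty.
  change (is_lim (fun t => t * (s * (ln t / t) - 1)) p_infty m_infty).
  replace m_infty with (Rbar_mult p_infty (s * 0 - 1)).
  - apply is_lim_mult.
    + apply is_lim_id.
    + apply is_lim_minus with (lf := s * 0) (lg := 1).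
      * exact (is_lim_scal_l _ s _ _ is_lim_div_ln_p).
      * apply is_lim_const.
      * reflexivity.
    + simpl. lra.
  - rewrite Rmult_0_r. simpl. destruct (Rle_dec 0 (0 - 1)); [exfalso; lra | reflexivity].
Qed.

(** * The Gaussian integral *)

Definition gauss (x : R) : R := RInt (fun u => exp (- (u * u))) 0 x.

Definition gauss_defect (x : R) : R :=
  RInt (fun t => exp (- (x * x) * (1 + t * t)) / (1 + t * t)) 0 1.

Lemma continuous_exp_opp_sqr x : continuous (fun u => exp (- (u * u))) x.
Proof. apply (ex_derive_continuous (V := R_NormedModule)). auto_derive. exact I. Qed.

Lemma ex_RInt_exp_opp_sqr a b : ex_RInt (fun u => exp (- (u * u))) a b.
Proof.
  apply (ex_RInt_continuous (V := R_CompleteNormedModule)).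
  intros x _. apply continuous_exp_opp_sqr.
Qed.

Lemma is_derive_gauss x : is_derive gauss x (exp (- (x * x))).
Proof.
  apply (is_derive_RInt (fun u => exp (- (u * u))) gauss 0 x).
  - apply filter_forall. intros b.
    apply (RInt_correct (V := R_CompleteNormedModule)), ex_RInt_exp_opp_sqr.
  - apply continuous_exp_opp_sqr.
Qed.

Lemma one_add_sqr_pos t : 0 < 1 + t * t.
Proof. nra. Qed.

Lemma is_derive_gauss_defect_integrand x t :
  is_derive (fun y => exp (- (y * y) * (1 + t * t)) / (1 + t * t)) x
    (- 2 * x * exp (- (x * x) * (1 + t * t))).
Proof. auto_derive; [exact I |]. field. apply Rgt_not_eq, one_add_sqr_pos. Qed.

Lemma continuous_gauss_defect_integrand x t :
  continuous (fun t => exp (- (x * x) * (1 + t * t)) / (1 + t * t)) t.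
Proof.
  apply (ex_derive_continuous (V := R_NormedModule)).
  auto_derive. apply Rgt_not_eq, one_add_sqr_pos.
Qed.

Lemma ex_RInt_gauss_defect_integrand x :
  ex_RInt (fun t => exp (- (x * x) * (1 + t * t)) / (1 + t * t)) 0 1.
Proof.
  apply (ex_RInt_continuous (V := R_CompleteNormedModule)).
  intros t _. apply continuous_gauss_defect_integrand.
Qed.

(* Differentiation under the integral sign, then the substitution u = x t. *)
Lemma is_derive_gauss_defect x :
  is_derive gauss_defect x (- 2 * exp (- (x * x)) * gauss x).
Proof.
  assert (Hint : RInt (fun t => - 2 * x * exp (- (x * x) * (1 + t * t))) 0 1
                 = - 2 * exp (- (x * x)) * gauss x).
  { rewrite (RInt_ext _ (fun t => scal (- 2 * exp (- (x * x)))
                                      (scal x (exp (- ((x * t + 0) * (x * t + 0))))))).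
    2:{ intros t _. unfold scal; simpl; unfold mult; simpl.
        replace (- (x * x) * (1 + t * t)) with (- (x * x) + - ((x * t + 0) * (x * t + 0)))
          by ring.
        rewrite exp_plus. ring. }
    rewrite (RInt_scal (V := R_CompleteNormedModule)).
    2:{ apply (ex_RInt_continuous (V := R_CompleteNormedModule)). intros t _.
        apply (ex_derive_continuous (V := R_NormedModule)).
        unfold scal; simpl; unfold mult; simpl. auto_derive. exact I. }
    rewrite (RInt_comp_lin (V := R_CompleteNormedModule) (fun u => exp (- (u * u))))
      by apply ex_RInt_exp_opp_sqr.
    unfold gauss, scal; simpl; unfold mult; simpl.
    rewrite Rmult_0_r, Rplus_0_r, Rmult_1_r, Rplus_0_r. ring. }
  rewrite <- Hint.
  rewrite (RInt_ext (fun t => - 2 * x * exp (- (x * x) * (1 + t * t)))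
    (fun t => Derive (fun y => exp (- (y * y) * (1 + t * t)) / (1 + t * t)) x)).
  2:{ intros t _. symmetry. apply is_derive_unique, is_derive_gauss_defect_integrand. }
  apply is_derive_RInt_param.
  - apply filter_forall. intros y t _. eexists. apply is_derive_gauss_defect_integrand.
  - intros t _.
    apply continuity_2d_pt_ext with (fun u v => - 2 * u * exp (- (u * u) * (1 + v * v))).
    { intros u v. symmetry. apply is_derive_unique, is_derive_gauss_defect_integrand. }
    apply continuity_2d_pt_mult.
    + apply continuity_2d_pt_mult; [apply continuity_2d_pt_const | apply continuity_2d_pt_id1].
    + apply continuity_1d_2d_pt_comp.
      * apply derivable_continuous_pt, derivable_pt_exp.
      * apply continuity_2d_pt_mult.
        -- apply continuity_2d_pt_opp, continuity_2d_pt_mult; apply continuity_2d_pt_id1.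
        -- apply continuity_2d_pt_plus; [apply continuity_2d_pt_const |].
           apply continuity_2d_pt_mult; apply continuity_2d_pt_id2.
  - apply filter_forall. intros y. apply ex_RInt_gauss_defect_integrand.
Qed.

Lemma gauss_defect_0 : gauss_defect 0 = PI / 4.
Proof.
  unfold gauss_defect.
  rewrite (RInt_ext _ (fun t => / (1 + t ^ 2))).
  2:{ intros t _. replace (- (0 * 0) * (1 + t * t)) with 0 by ring.
      rewrite exp_0. unfold Rdiv. rewrite Rmult_1_l. f_equal. ring. }
  rewrite (is_RInt_unique _ _ _ (atan 1 - atan 0)).
  - rewrite atan_1, atan_0. ring.
  - apply (is_RInt_derive atan).
    + intros t _. replace (1 + t ^ 2) with (1 + t²) by (unfold Rsqr; ring).
      apply is_derive_atan.
    + intros t _. apply (ex_derive_continuous (V := R_NormedModule)). auto_derive.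
      apply Rgt_not_eq. nra.
Qed.

Lemma gauss_sqr_add_defect x : gauss x * gauss x + gauss_defect x = PI / 4.
Proof.
  set (f := fun y => gauss y * gauss y + gauss_defect y).
  assert (Hf : forall t, is_derive f t 0).
  { intros t. replace 0 with ((exp (- (t * t)) * gauss t + gauss t * exp (- (t * t)))
                              + - 2 * exp (- (t * t)) * gauss t) by ring.
    apply (is_derive_plus (fun y => gauss y * gauss y) gauss_defect).
    - apply (is_derive_mult gauss gauss); try apply is_derive_gauss.
      intros; apply Rmult_comm.
    - apply is_derive_gauss_defect. }
  assert (Hf0 : f 0 = PI / 4).
  { unfold f, gauss. rewrite RInt_point, gauss_defect_0. unfold zero; simpl. ring. }
  fold (f x). rewrite <- Hf0.
  destruct (Rtotal_order x 0) as [Hx | [-> | Hx]].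
  - apply (eq_is_derive f); [intros t _; apply Hf | exact Hx].
  - reflexivity.
  - symmetry. apply (eq_is_derive f); [intros t _; apply Hf | exact Hx].
Qed.

Lemma exp_opp_le_inv y : 0 <= y -> exp (- y) <= / (1 + y).
Proof. intros Hy. rewrite exp_Ropp. apply Rinv_le_contravar; [lra | apply exp_ineq1_le]. Qed.

Lemma gauss_defect_bounds x : 0 <= gauss_defect x <= / (1 + x * x).
Proof.
  split.
  - apply RInt_ge_0; [lra | apply ex_RInt_gauss_defect_integrand |].
    intros t _. apply Rlt_le, Rdiv_lt_0_compat; [apply exp_pos | apply one_add_sqr_pos].
  - replace (/ (1 + x * x)) with (RInt (fun _ => / (1 + x * x)) 0 1)
      by (rewrite RInt_const; unfold scal; simpl; unfold mult; simpl; ring).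
    apply RInt_le; [lra | apply ex_RInt_gauss_defect_integrand | apply ex_RInt_const |].
    intros t _.
    assert (Hx := one_add_sqr_pos x). assert (Ht := one_add_sqr_pos t).
    assert (Hexp := exp_pos (- (x * x) * (1 + t * t))).
    assert (Hle : exp (- (x * x) * (1 + t * t)) <= / (1 + x * x)).
    { rewrite Ropp_mult_distr_l_reverse.
      apply Rle_trans with (/ (1 + x * x * (1 + t * t))).
      - apply exp_opp_le_inv. nra.
      - apply Rinv_le_contravar; nra. }
    apply Rle_trans with (exp (- (x * x) * (1 + t * t))); [| exact Hle].
    unfold Rdiv. rewrite <- (Rmult_1_r (exp _)) at 2.
    apply Rmult_le_compat_l; [lra |].
    rewrite <- Rinv_1. apply Rinv_le_contravar; nra.
Qed.

Lemma gauss_defect_lim : filterlim gauss_defect (Rbar_locally p_infty) (locally 0).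
Proof.
  apply filterlim_locally. intros eps.
  assert (He := cond_pos eps).
  exists (/ eps). intros x Hx.
  assert (Hx0 : 0 < x) by (assert (0 < / eps) by (apply Rinv_0_lt_compat, He); lra).
  destruct (gauss_defect_bounds x) as [H0 H1].
  assert (Hlt : / (1 + x * x) < eps).
  { rewrite <- (Rinv_inv eps). apply Rinv_lt_contravar.
    - apply Rmult_lt_0_compat; [apply Rinv_0_lt_compat, He | apply one_add_sqr_pos].
    - nra. }
  change (Rabs (gauss_defect x - 0) < eps).
  rewrite Rminus_0_r, Rabs_right; lra.
Qed.

Lemma gauss_nonneg x : 0 <= x -> 0 <= gauss x.
Proof.
  intros Hx. apply RInt_ge_0; [exact Hx | apply ex_RInt_exp_opp_sqr |].
  intros t _. apply Rlt_le, exp_pos.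
Qed.

Lemma gauss_lim : filterlim gauss (Rbar_locally p_infty) (locally (sqrt PI / 2)).
Proof.
  apply filterlim_ext_loc with (fun x => sqrt (PI / 4 - gauss_defect x)).
  { exists 0. intros x Hx. rewrite <- (gauss_sqr_add_defect x).
    replace (gauss x * gauss x + gauss_defect x - gauss_defect x) with (gauss x * gauss x)
      by ring.
    apply sqrt_square, gauss_nonneg; lra. }
  replace (sqrt PI / 2) with (sqrt (PI / 4 - 0)).
  2:{ replace (PI / 4 - 0) with (PI / (2 * 2)) by field.
      rewrite sqrt_div_alt by lra. rewrite sqrt_square; lra. }
  apply (filterlim_comp _ _ _ gauss_defect (fun y => sqrt (PI / 4 - y)) _ (locally 0)).
  { apply gauss_defect_lim. }
  apply (continuous_comp (fun y => PI / 4 - y) sqrt).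
  - apply (ex_derive_continuous (V := R_NormedModule)). auto_derive. exact I.
  - apply continuity_pt_filterlim, continuity_pt_sqrt.
    assert (H := PI_RGT_0). lra.
Qed.

(** * The Gamma integral at half-integers *)

Definition Gamma_integrand (s t : R) : R := Rpower t (s - 1) * exp (- t).

Definition is_Gamma (s l : R) : Prop :=
  is_RInt_gen (Gamma_integrand s) (at_right 0) (Rbar_locally p_infty) l.

Lemma filter_prod_at_right_0_p_infty :
  filter_prod (at_right 0) (Rbar_locally p_infty)
    (fun ab => forall x, Rmin (fst ab) (snd ab) <= x <= Rmax (fst ab) (snd ab) -> 0 < x).
Proof.
  apply Filter_prod with (fun a => 0 < a) (fun b => 0 < b).
  - exists (mkposreal 1 Rlt_0_1). intros a _ Ha. exact Ha.
  - exists 0. intros b Hb. exact Hb.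
  - intros a b Ha Hb x [Hx _]. simpl in Hx.
    assert (0 < Rmin a b) by (apply Rmin_glb_lt; assumption). lra.
Qed.

Lemma is_RInt_gen_antiderivative (F f : R -> R) (la lb : R) :
  (forall t, 0 < t -> is_derive F t (f t)) ->
  (forall t, 0 < t -> continuous f t) ->
  filterlim F (at_right 0) (locally la) ->
  filterlim F (Rbar_locally p_infty) (locally lb) ->
  is_RInt_gen f (at_right 0) (Rbar_locally p_infty) (lb - la).
Proof.
  intros HF Hf Hla Hlb.
  assert (HDF : forall t, 0 < t -> Derive F t = f t).
  { intros t Ht. apply is_derive_unique, HF, Ht. }
  apply is_RInt_gen_ext with (Derive F).
  { eapply filter_imp; [| exact filter_prod_at_right_0_p_infty].
    intros ab Hab x Hx. apply HDF, Hab. lra. }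
  apply is_RInt_gen_Derive; [| | exact Hla | exact Hlb].
  - eapply filter_imp; [| exact filter_prod_at_right_0_p_infty].
    intros ab Hab x Hx. eexists. apply HF, Hab, Hx.
  - eapply filter_imp; [| exact filter_prod_at_right_0_p_infty].
    intros ab Hab x Hx. assert (Hx0 := Hab x Hx).
    apply continuous_ext_loc with f; [| apply Hf, Hx0].
    exists (mkposreal x Hx0). intros y Hy. symmetry. apply HDF.
    change (Rabs (y - x) < x) in Hy. apply Rabs_def2 in Hy. lra.
Qed.

Lemma filterlim_at_right_of_continuous (F : R -> R) x :
  continuous F x -> filterlim F (at_right x) (locally (F x)).
Proof. intros HF. eapply filterlim_filter_le_1; [apply filter_le_within | exact HF]. Qed.

Lemma is_derive_Rpower_mul_exp_opp s t :
  0 < t -> is_derive (fun x => Rpower x s * exp (- x)) t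
             (s * Gamma_integrand s t - Gamma_integrand (s + 1) t).
Proof.
  intros Ht. unfold Gamma_integrand. replace (s + 1 - 1) with s by ring.
  replace (s * (Rpower t (s - 1) * exp (- t)) - Rpower t s * exp (- t))
    with (s * Rpower t (s - 1) * exp (- t) + Rpower t s * - exp (- t)) by ring.
  apply (is_derive_mult (fun x => Rpower x s) (fun x => exp (- x))).
  - apply is_derive_Reals, derivable_pt_lim_power, Ht.
  - auto_derive; [exact I | ring].
  - intros; apply Rmult_comm.
Qed.

Lemma continuous_Gamma_integrand s t : 0 < t -> continuous (Gamma_integrand s) t.
Proof.
  intros Ht. apply (ex_derive_continuous (V := R_NormedModule)).
  eexists. apply (is_derive_Rpower_mul_exp_opp (s - 1) t Ht).
Qed.

Lemma is_Gamma_succ s l : 0 < s -> is_Gamma s l -> is_Gamma (s + 1) (s * l).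
Proof.
  intros Hs Hl.
  assert (Hparts : is_RInt_gen (fun t => s * Gamma_integrand s t - Gamma_integrand (s + 1) t)
                     (at_right 0) (Rbar_locally p_infty) (0 - 0)).
  { apply (is_RInt_gen_antiderivative (fun x => Rpower x s * exp (- x))).
    - apply is_derive_Rpower_mul_exp_opp.
    - intros t Ht. apply (continuous_minus (fun t => s * Gamma_integrand s t)).
      + apply (continuous_scal_r s (Gamma_integrand s)), continuous_Gamma_integrand, Ht.
      + apply continuous_Gamma_integrand, Ht.
    - apply Rpower_mul_exp_opp_lim_0, Hs.
    - apply Rpower_mul_exp_opp_lim_p_infty. }
  assert (H := is_RInt_gen_minus _ _ _ _ (is_RInt_gen_scal _ s _ Hl) Hparts).
  replace (s * l) with (minus (scal s l) (0 - 0))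
    by (unfold minus, plus, opp, scal; simpl; unfold mult; simpl; ring).
  refine (is_RInt_gen_ext _ _ _ _ H).
  apply filter_forall. intros ab x _.
  unfold minus, plus, opp, scal; simpl; unfold mult; simpl. ring.
Qed.

Lemma is_Gamma_1 : is_Gamma 1 1.
Proof.
  replace 1 with (0 - - exp (- 0)) at 2 by (rewrite Ropp_0, exp_0; ring).
  unfold is_Gamma. apply (is_RInt_gen_antiderivative (fun t => - exp (- t))).
  - intros t Ht. unfold Gamma_integrand. rewrite Rminus_diag, Rpower_O by exact Ht.
    auto_derive; [exact I | ring].
  - apply continuous_Gamma_integrand.
  - apply (filterlim_at_right_of_continuous (fun t => - exp (- t))).
    apply (ex_derive_continuous (V := R_NormedModule)). auto_derive. exact I.
  - apply filterlim_ext_loc with (fun t => - (Rpower t 0 * exp (- t))).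
    { exists 0. intros t Ht. rewrite Rpower_O by exact Ht. ring. }
    rewrite <- Ropp_0.
    apply (filterlim_comp _ _ _ _ Ropp _ (locally 0)).
    + apply Rpower_mul_exp_opp_lim_p_infty.
    + apply (filterlim_opp (K := R_AbsRing) (V := R_NormedModule)).
Qed.

(* The substitution t = u ^ 2 reduces Gamma (1/2) to twice the Gaussian integral. *)
Lemma is_Gamma_half : is_Gamma (1 / 2) (sqrt PI).
Proof.
  replace (sqrt PI) with (2 * (sqrt PI / 2) - 2 * gauss (sqrt 0))
    by (rewrite sqrt_0; unfold gauss; rewrite RInt_point; unfold zero; simpl; field).
  unfold is_Gamma. apply (is_RInt_gen_antiderivative (fun t => 2 * gauss (sqrt t))).
  - intros t Ht. assert (Hs : 0 < sqrt t) by (apply sqrt_lt_R0, Ht).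
    replace (Gamma_integrand (1 / 2) t)
      with (2 * (/ (2 * sqrt t) * exp (- (sqrt t * sqrt t)))).
    2:{ unfold Gamma_integrand. replace (1 / 2 - 1) with (- / 2) by field.
        rewrite Rpower_Ropp, Rpower_sqrt, sqrt_sqrt by lra. field. lra. }
    apply (is_derive_scal (fun t => gauss (sqrt t))).
    apply (is_derive_comp gauss sqrt t).
    + apply is_derive_gauss.
    + apply is_derive_Reals, derivable_pt_lim_sqrt, Ht.
  - apply continuous_Gamma_integrand.
  - apply (filterlim_at_right_of_continuous (fun t => 2 * gauss (sqrt t))).
    apply (continuous_comp (fun t => gauss (sqrt t)) (fun y => 2 * y)).
    + apply (continuous_comp sqrt gauss).
      * apply continuity_pt_filterlim, continuity_pt_sqrt. lra.
      * apply (ex_derive_continuous (V := R_NormedModule)). eexists. apply is_derive_gauss.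
    + apply (ex_derive_continuous (V := R_NormedModule)). auto_derive. exact I.
  - apply (filterlim_comp _ _ _ (fun t => gauss (sqrt t)) (fun y => 2 * y) _
             (locally (sqrt PI / 2))).
    + apply (filterlim_comp _ _ _ sqrt gauss _ (Rbar_locally p_infty)).
      * apply filterlim_sqrt_p.
      * apply gauss_lim.
    + apply (ex_derive_continuous (V := R_NormedModule)). auto_derive. exact I.
Qed.

(* Positive multiples of 1/2, integers included. *)
Definition half_integer (s : R) : Prop := exists k : nat, s = INR (S k) / 2.

Lemma half_integer_pos s : half_integer s -> 0 < s.
Proof. intros [k ->]. apply Rdiv_lt_0_compat; [apply lt_0_INR; lia | lra]. Qed.

Lemma half_integer_add_half s : half_integer s -> half_integer (s + 1 / 2).
Proof. intros [k ->]. exists (S k). rewrite (S_INR (S k)). field. Qed.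

Lemma half_integer_double s : half_integer s -> half_integer (2 * s).
Proof.
  intros [k ->]. exists (S (2 * k)).
  rewrite !S_INR, mult_INR. simpl (INR 2). field.
Qed.

Lemma half_integer_ind (P : R -> Prop) :
  P (1 / 2) -> (forall s, half_integer s -> P s -> P (s + 1 / 2)) ->
  forall s, half_integer s -> P s.
Proof.
  intros H0 HS s [k ->]. induction k as [| k IH].
  - replace (INR 1 / 2) with (1 / 2) by (simpl; field). exact H0.
  - replace (INR (S (S k)) / 2) with (INR (S k) / 2 + 1 / 2)
      by (rewrite (S_INR (S k)); field).
    apply HS; [exists k; reflexivity | exact IH].
Qed.

Lemma half_integer_ind_succ (P : R -> Prop) :
  P (1 / 2) -> P 1 -> (forall s, half_integer s -> P s -> P (s + 1)) ->
  forall s, half_integer s -> P s.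
Proof.
  intros H0 H1 HS s Hs.
  apply (half_integer_ind (fun s => P s /\ P (s + 1 / 2))); [| | exact Hs].
  - split; [exact H0 | replace (1 / 2 + 1 / 2) with 1 by field; exact H1].
  - intros t Ht [Pt Pt']. split; [exact Pt' |].
    replace (t + 1 / 2 + 1 / 2) with (t + 1) by field. apply HS; assumption.
Qed.

Lemma Gamma_unique s l : is_Gamma s l -> Gamma s = l.
Proof.
  unfold is_Gamma, Gamma_integrand, Gamma.
  apply (is_RInt_gen_unique (V := R_CompleteNormedModule)).
Qed.

Lemma is_Gamma_half_integer s : half_integer s -> exists l, 0 < l /\ is_Gamma s l.
Proof.
  revert s. apply (half_integer_ind_succ (fun s => exists l, 0 < l /\ is_Gamma s l)).
  - exists (sqrt PI). split; [apply sqrt_lt_R0, PI_RGT_0 | apply is_Gamma_half].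
  - exists 1. split; [lra | apply is_Gamma_1].
  - intros s Hs [l [Hl HG]]. exists (s * l). split.
    + apply Rmult_lt_0_compat; [apply half_integer_pos, Hs | exact Hl].
    + apply is_Gamma_succ; [apply half_integer_pos, Hs | exact HG].
Qed.

Lemma Gamma_half_integer_pos s : half_integer s -> 0 < Gamma s.
Proof.
  intros Hs. destruct (is_Gamma_half_integer s Hs) as [l [Hl HG]].
  rewrite (Gamma_unique s l HG). exact Hl.
Qed.

Lemma Gamma_succ s : half_integer s -> Gamma (s + 1) = s * Gamma s.
Proof.
  intros Hs. destruct (is_Gamma_half_integer s Hs) as [l [_ HG]].
  rewrite (Gamma_unique s l HG).
  apply Gamma_unique, is_Gamma_succ; [apply half_integer_pos, Hs | exact HG].
Qed.

Lemma Gamma_1 : Gamma 1 = 1.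
Proof. apply Gamma_unique, is_Gamma_1. Qed.

Lemma Gamma_half : Gamma (1 / 2) = sqrt PI.
Proof. apply Gamma_unique, is_Gamma_half. Qed.

Lemma Gamma_duplication s : half_integer s ->
  Rpower 2 (2 * s - 1) * Gamma s * Gamma (s + 1 / 2) = sqrt PI * Gamma (2 * s).
Proof.
  revert s.
  apply (half_integer_ind (fun s =>
    Rpower 2 (2 * s - 1) * Gamma s * Gamma (s + 1 / 2) = sqrt PI * Gamma (2 * s))).
  - replace (2 * (1 / 2) - 1) with 0 by field. replace (2 * (1 / 2)) with 1 by field.
    replace (1 / 2 + 1 / 2) with 1 by field.
    rewrite Rpower_O, Gamma_half, Gamma_1 by lra. ring.
  - intros s Hs IH.
    replace (2 * (s + 1 / 2) - 1) with ((2 * s - 1) + 1) by field.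
    replace (s + 1 / 2 + 1 / 2) with (s + 1) by field.
    replace (2 * (s + 1 / 2)) with (2 * s + 1) by field.
    rewrite Rpower_plus, Rpower_1 by lra.
    rewrite (Gamma_succ s Hs), (Gamma_succ (2 * s) (half_integer_double s Hs)).
    transitivity (2 * s * (Rpower 2 (2 * s - 1) * Gamma s * Gamma (s + 1 / 2)));
      [ring | rewrite IH; ring].
Qed.

Lemma half_integer_half : half_integer (1 / 2).
Proof. exists 0%nat. simpl. field. Qed.

Lemma half_integer_1 : half_integer 1.
Proof. exists 1%nat. simpl. field. Qed.

Lemma Gamma_3_2 : Gamma (3 / 2) = sqrt PI / 2.
Proof.
  replace (3 / 2) with (1 / 2 + 1) by field.
  rewrite (Gamma_succ _ half_integer_half), Gamma_half. field.
Qed.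

Lemma Gamma_2 : Gamma 2 = 1.
Proof.
  replace 2 with (1 + 1) by ring.
  rewrite (Gamma_succ _ half_integer_1), Gamma_1. ring.
Qed.

(** * A Stirling-type lower bound *)

Lemma PI_le_3_24 : PI <= 3.24.
Proof.
  destruct (PI_2_3_7_ineq 0) as [_ H].
  unfold tg_alt, PI_2_3_7_tg, Ratan_seq in H. simpl in H. lra.
Qed.

Lemma exp_2_ge_7 : 7 <= exp 2.
Proof. assert (H := exp_ge_taylor 2 4 ltac:(lra)). simpl in H. lra. Qed.

Lemma exp_3_ge_18 : 18 <= exp 3.
Proof. assert (H := exp_ge_taylor 3 5 ltac:(lra)). simpl in H. lra. Qed.

Lemma ln_1_add_ge x : 0 < x -> 2 * x / (2 + x) <= ln (1 + x).
Proof.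
  intros Hx.
  set (phi := fun y => ln (1 + y) - 2 * y / (2 + y)).
  destruct (MVT_cor2 phi (fun y => / (1 + y) - 4 / ((2 + y) * (2 + y))) 0 x Hx)
    as [c [Hc Hc0x]].
  - intros c Hc. unfold phi. apply is_derive_Reals. auto_derive.
    + repeat split; lra.
    + field. lra.
  - unfold phi in Hc. rewrite Rplus_0_r, ln_1 in Hc.
    assert (Hd : 0 <= / (1 + c) - 4 / ((2 + c) * (2 + c))).
    { replace (/ (1 + c) - 4 / ((2 + c) * (2 + c)))
        with (c * c / ((1 + c) * ((2 + c) * (2 + c)))) by (field; lra).
      apply Rle_mult_inv_pos; [nra | apply Rmult_lt_0_compat; nra]. }
    replace (2 * 0 / (2 + 0)) with 0 in Hc by field. nra.
Qed.

Lemma exp_1_le_mul_Rpower m :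
  0 < m -> exp 1 <= (1 + / (2 * m)) * Rpower (1 + / m) m.
Proof.
  intros Hm.
  assert (Hinv : 0 < / (2 * m)) by (apply Rinv_0_lt_compat; lra).
  assert (Hm1 := ln_1_add_ge (/ m) (Rinv_0_lt_compat m Hm)).
  assert (Hm2 := ln_1_add_ge (/ (2 * m)) Hinv).
  replace (2 * / m / (2 + / m)) with (2 / (2 * m + 1)) in Hm1 by (field; lra).
  replace (2 * / (2 * m) / (2 + / (2 * m))) with (2 / (4 * m + 1)) in Hm2 by (field; lra).
  assert (Hsum : 1 <= 2 / (4 * m + 1) + m * (2 / (2 * m + 1))).
  { replace (2 / (4 * m + 1) + m * (2 / (2 * m + 1)))
      with (1 + 1 / ((4 * m + 1) * (2 * m + 1))) by (field; lra).
    assert (0 < 1 / ((4 * m + 1) * (2 * m + 1))) by (apply Rdiv_lt_0_compat; nra).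
    lra. }
  rewrite <- (exp_ln (1 + / (2 * m))) by lra.
  unfold Rpower. rewrite <- exp_plus.
  apply Rnot_lt_le. intros Hlt. apply exp_lt_inv in Hlt. nra.
Qed.

(* By Stirling's formula this tends to 1 / sqrt (2 PI), which exceeds the constant
   3 sqrt PI / (sqrt 2 * exp (5/2)) of the theorem. *)
Definition Gamma_stirling_ratio (m : R) : R :=
  Gamma (m + 1 / 2) / (m * Rpower (exp 1 / m) m * Gamma m ^ 2).

Lemma Gamma_stirling_ratio_le_succ m :
  half_integer m -> Gamma_stirling_ratio m <= Gamma_stirling_ratio (m + 1).
Proof.
  intros Hm.
  assert (Hm0 := half_integer_pos m Hm).
  assert (He := exp_pos 1).
  unfold Gamma_stirling_ratio.
  replace (m + 1 + 1 / 2) with (m + 1 / 2 + 1) by ring.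
  rewrite (Gamma_succ (m + 1 / 2) (half_integer_add_half m Hm)), (Gamma_succ m Hm).
  rewrite Rpower_plus, Rpower_1 by (apply Rdiv_lt_0_compat; lra).
  replace (exp 1 / m) with (exp 1 / (m + 1) * (1 + / m)) by (field; lra).
  assert (Hinv : 0 < / m) by (apply Rinv_0_lt_compat; lra).
  rewrite <- Rpower_mult_distr by (try apply Rdiv_lt_0_compat; lra).
  set (A := Rpower (exp 1 / (m + 1)) m).
  set (B := Rpower (1 + / m) m).
  assert (HA : 0 < A) by apply exp_pos.
  assert (HB : 0 < B) by apply exp_pos.
  set (G := Gamma (m + 1 / 2)). set (g := Gamma m).
  assert (Hg : 0 < g) by apply (Gamma_half_integer_pos m Hm).
  assert (HG : 0 < G) by apply (Gamma_half_integer_pos _ (half_integer_add_half m Hm)).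
  replace (G / (m * (A * B) * g ^ 2)) with (G / (m * A * g ^ 2) * / B)
    by (field; repeat split; lra).
  replace ((m + 1 / 2) * G / ((m + 1) * (A * (exp 1 / (m + 1))) * (m * g) ^ 2))
    with (G / (m * A * g ^ 2) * ((1 + / (2 * m)) / exp 1)) by (field; repeat split; lra).
  apply Rmult_le_compat_l.
  { apply Rlt_le, Rdiv_lt_0_compat; [exact HG |]. apply Rmult_lt_0_compat; [nra | nra]. }
  apply (Rmult_le_reg_r (B * exp 1)); [nra |].
  replace (/ B * (B * exp 1)) with (exp 1) by (field; lra).
  replace ((1 + / (2 * m)) / exp 1 * (B * exp 1)) with ((1 + / (2 * m)) * B) by (field; lra).
  apply exp_1_le_mul_Rpower, Hm0.
Qed.

Lemma exp_5_2_sqr : exp (5 / 2) * exp (5 / 2) = exp 2 * exp 3.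
Proof. rewrite <- !exp_plus. f_equal. field. Qed.

Lemma Gamma_stirling_ratio_1_ge :
  3 * sqrt PI / (sqrt 2 * exp (5 / 2)) <= Gamma_stirling_ratio 1.
Proof.
  unfold Gamma_stirling_ratio.
  replace (1 + 1 / 2) with (3 / 2) by field. replace (exp 1 / 1) with (exp 1) by field.
  rewrite Gamma_3_2, Gamma_1, Rpower_1 by apply exp_pos.
  assert (Hsp : 0 < sqrt PI) by apply sqrt_lt_R0, PI_RGT_0.
  assert (Hs2 : 0 < sqrt 2) by (apply sqrt_lt_R0; lra).
  assert (He := exp_pos 1). assert (HE := exp_pos (5 / 2)).
  assert (Hkey : 6 * exp 1 <= sqrt 2 * exp (5 / 2)).
  { apply Rsqr_incr_0_var; [| nra]. unfold Rsqr.
    assert (He2 : exp 1 * exp 1 = exp 2) by (rewrite <- exp_plus; f_equal; ring).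
    assert (Hs22 : sqrt 2 * sqrt 2 = 2) by (apply sqrt_sqrt; lra).
    assert (HE2 := exp_5_2_sqr). assert (H3 := exp_3_ge_18). assert (H2 := exp_pos 2).
    replace (sqrt 2 * exp (5 / 2) * (sqrt 2 * exp (5 / 2)))
      with (sqrt 2 * sqrt 2 * (exp (5 / 2) * exp (5 / 2))) by ring.
    replace (6 * exp 1 * (6 * exp 1)) with (36 * (exp 1 * exp 1)) by ring.
    rewrite Hs22, HE2, He2. nra. }
  set (D := sqrt PI / (2 * exp 1 * (sqrt 2 * exp (5 / 2)))).
  assert (HD : 0 < D) by (apply Rdiv_lt_0_compat; nra).
  replace (3 * sqrt PI / (sqrt 2 * exp (5 / 2))) with (6 * exp 1 * D)
    by (unfold D; field; lra).
  replace (sqrt PI / 2 / (1 * exp 1 * 1 ^ 2)) with (sqrt 2 * exp (5 / 2) * D)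
    by (unfold D; field; lra).
  apply Rmult_le_compat_r; lra.
Qed.

Lemma Gamma_stirling_ratio_3_2_ge :
  3 * sqrt PI / (sqrt 2 * exp (5 / 2)) <= Gamma_stirling_ratio (3 / 2).
Proof.
  unfold Gamma_stirling_ratio.
  replace (3 / 2 + 1 / 2) with 2 by field.
  rewrite Gamma_2, Gamma_3_2.
  assert (HP := PI_RGT_0). assert (HP3 := PI_le_3_24).
  assert (Hsp : 0 < sqrt PI) by (apply sqrt_lt_R0; lra).
  assert (Hs2 : 0 < sqrt 2) by (apply sqrt_lt_R0; lra).
  assert (He := exp_pos 1). assert (HE := exp_pos (5 / 2)).
  set (R := Rpower (exp 1 / (3 / 2)) (3 / 2)).
  assert (HR : 0 < R) by apply exp_pos.
  assert (HRR : R * R = 8 * exp 3 / 27).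
  { unfold R. rewrite <- Rpower_plus.
    replace (3 / 2 + 3 / 2) with (INR 3) by (simpl; field).
    rewrite Rpower_pow by (apply Rdiv_lt_0_compat; lra).
    replace (exp 3) with (exp 1 * exp 1 * exp 1) by (rewrite <- !exp_plus; f_equal; ring).
    simpl. field. }
  replace ((sqrt PI / 2) ^ 2) with (sqrt PI * sqrt PI / 4) by field.
  rewrite sqrt_sqrt by lra.
  assert (Hkey : 9 * PI * sqrt PI * R <= 8 * sqrt 2 * exp (5 / 2)).
  { apply Rsqr_incr_0_var; [| nra]. unfold Rsqr.
    assert (Hsp2 : sqrt PI * sqrt PI = PI) by (apply sqrt_sqrt; lra).
    assert (Hs22 : sqrt 2 * sqrt 2 = 2) by (apply sqrt_sqrt; lra).
    assert (HE2 := exp_5_2_sqr). assert (H2 := exp_2_ge_7). assert (H3 := exp_pos 3).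
    assert (HPPP : PI * PI * PI <= 35) by nra.
    replace (9 * PI * sqrt PI * R * (9 * PI * sqrt PI * R))
      with (81 * PI * PI * (sqrt PI * sqrt PI) * (R * R)) by ring.
    replace (8 * sqrt 2 * exp (5 / 2) * (8 * sqrt 2 * exp (5 / 2)))
      with (64 * (sqrt 2 * sqrt 2) * (exp (5 / 2) * exp (5 / 2))) by ring.
    rewrite Hsp2, Hs22, HE2, HRR.
    assert (PI * PI * PI * exp 3 <= 35 * exp 3) by (apply Rmult_le_compat_r; lra).
    assert (7 * exp 3 <= exp 2 * exp 3) by (apply Rmult_le_compat_r; lra).
    lra. }
  set (D := / (3 * PI * R * sqrt 2 * exp (5 / 2))).
  assert (HD : 0 < D).
  { unfold D. apply Rinv_0_lt_compat.
    assert (0 < 3 * PI * R) by nra. assert (0 < 3 * PI * R * sqrt 2) by nra. nra. }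
  replace (3 * sqrt PI / (sqrt 2 * exp (5 / 2))) with (9 * PI * sqrt PI * R * D)
    by (unfold D; field; repeat split; lra).
  replace (1 / (3 / 2 * R * (PI / 4))) with (8 * sqrt 2 * exp (5 / 2) * D)
    by (unfold D; field; repeat split; lra).
  apply Rmult_le_compat_r; lra.
Qed.

Lemma Gamma_stirling_ratio_lower_bound m : half_integer m -> 1 <= m ->
  3 * sqrt PI / (sqrt 2 * exp (5 / 2)) <= Gamma_stirling_ratio m.
Proof.
  revert m.
  apply (half_integer_ind_succ (fun m => 1 <= m ->
    3 * sqrt PI / (sqrt 2 * exp (5 / 2)) <= Gamma_stirling_ratio m)).
  - lra.
  - intros _. apply Gamma_stirling_ratio_1_ge.
  - intros m Hm IH Hm1. destruct (Rle_lt_dec 1 m) as [H1 | H1].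
    + eapply Rle_trans; [apply IH, H1 | apply Gamma_stirling_ratio_le_succ, Hm].
    + destruct Hm as [[| k] ->].
      * replace (INR 1 / 2 + 1) with (3 / 2) by (simpl; field).
        apply Gamma_stirling_ratio_3_2_ge.
      * exfalso. rewrite !S_INR in H1. assert (H := pos_INR k). lra.
Qed.

(** * The constant K_n *)

Lemma P1_succ_ge_1 k : 1 <= P1 (S k).
Proof.
  induction k as [| k IH].
  - simpl. lra.
  - change (P1 (S (S k))) with (P1 (S k) + / INR (S (S k))).
    assert (0 < / INR (S (S k))) by (apply Rinv_0_lt_compat, lt_0_INR; lia). lra.
Qed.

Lemma P1_nonneg k : 0 <= P1 k.
Proof. destruct k; [simpl; lra | assert (H := P1_succ_ge_1 k); lra]. Qed.

Lemma ln_3_4_gt_m1 : -1 < ln (3 / 4).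
Proof.
  rewrite <- (ln_exp (-1)). apply ln_increasing; [apply exp_pos |].
  replace (-1) with (- (1)) by ring. rewrite exp_Ropp. assert (He := exp_ineq1 1 ltac:(lra)).
  rewrite <- Rinv_inv. apply Rinv_lt_contravar; lra.
Qed.

Lemma Qn_pos n : (3 <= n)%nat -> 0 < Qn n.
Proof.
  intros Hn. unfold Qn.
  assert (H1 := P1_nonneg (n - 3)).
  assert (H2 : 1 <= P1 (n - 2))
    by (replace (n - 2)%nat with (S (n - 3)) by lia; apply P1_succ_ge_1).
  assert (H3 := ln_3_4_gt_m1).
  assert (H4 : 3 <= 3 ^ (n - 2)).
  { replace (n - 2)%nat with (S (n - 3)) by lia. simpl.
    assert (1 <= 3 ^ (n - 3)) by (apply pow_R1_Rle; lra). lra. }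
  assert (H5 : 0 < 1 - / 3 ^ (n - 2)).
  { assert (/ 3 ^ (n - 2) <= / 3) by (apply Rinv_le_contravar; lra). lra. }
  assert (0 < (1 - / 3 ^ (n - 2)) * (P1 (n - 2) + ln (3 / 4)))
    by (apply Rmult_lt_0_compat; lra).
  lra.
Qed.

Lemma Rpower_add_half x y : 0 < x -> Rpower x (y + 1 / 2) = Rpower x y * sqrt x.
Proof. intros Hx. rewrite Rpower_plus, <- Rpower_sqrt by exact Hx. do 2 f_equal. field. Qed.

Lemma Kn_eq_Gamma_stirling_ratio n m : (3 <= n)%nat -> INR n = 2 * m + 1 ->
  Kn n = Gamma_stirling_ratio m
         * (Qn n * Rpower PI (m - 1 / 2) * Rpower (exp 1 / m) m / (2 * (2 * m - 1))).
Proof.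
  intros Hn Hm.
  assert (Hm1 : half_integer (m - 1 / 2)).
  { exists (n - 3)%nat. rewrite S_INR, minus_INR by lia. simpl. lra. }
  assert (Hm2 : half_integer m).
  { exists (n - 2)%nat. rewrite S_INR, minus_INR by lia. simpl. lra. }
  assert (Hm0 : 1 <= m) by (apply le_INR in Hn; simpl in Hn; lra).
  unfold Kn, Vsph, Gamma_stirling_ratio.
  replace (INR (n - 2 + 1) / 2) with m by (rewrite plus_INR, minus_INR by lia; simpl; lra).
  replace (INR (n - 3 + 1) / 2) with (m - 1 / 2)
    by (rewrite plus_INR, minus_INR by lia; simpl; lra).
  replace (INR (n - 1 + 1) / 2) with (m + 1 / 2)
    by (rewrite plus_INR, minus_INR by lia; simpl; lra).
  replace (INR n / 2) with (m + 1 / 2) by lra.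
  replace (INR n - 2) with (2 * m - 1) by lra.
  rewrite <- (Rpower_pow (n - 2) 2), minus_INR, Hm by lia || lra.
  replace (2 * m + 1 - INR 2) with (2 * m - 1) by (simpl; ring).
  assert (HP := PI_RGT_0).
  assert (Hsp : 0 < sqrt PI) by (apply sqrt_lt_R0; lra).
  assert (Hg := Gamma_half_integer_pos m Hm2).
  assert (HG := Gamma_half_integer_pos (m + 1 / 2) (half_integer_add_half m Hm2)).
  assert (Hdup := Gamma_duplication m Hm2).
  assert (HT : 0 < Rpower 2 (2 * m - 1)) by apply exp_pos.
  assert (Hp : 0 < Rpower PI (m - 1 / 2)) by apply exp_pos.
  assert (HX : 0 < Rpower (exp 1 / m) m) by apply exp_pos.
  rewrite (Gamma_succ (2 * m) (half_integer_double m Hm2)).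
  replace (Gamma (2 * m))
    with (Rpower 2 (2 * m - 1) * Gamma m * Gamma (m + 1 / 2) / sqrt PI)
    by (rewrite Hdup; field; lra).
  replace (Gamma (m - 1 / 2)) with (Gamma (m + 1 / 2) / (m - 1 / 2)).
  2:{ replace (m + 1 / 2) with (m - 1 / 2 + 1) by field.
      rewrite (Gamma_succ _ Hm1). field. lra. }
  replace (Rpower PI m) with (Rpower PI (m - 1 / 2) * sqrt PI)
    by (rewrite <- Rpower_add_half by lra; f_equal; field).
  replace (Rpower PI (m + 1 / 2)) with (Rpower PI (m - 1 / 2) * (sqrt PI * sqrt PI)).
  2:{ rewrite sqrt_sqrt by lra. replace (m + 1 / 2) with (m - 1 / 2 + 1) by field.
      rewrite Rpower_plus, Rpower_1 by lra. reflexivity. }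
  field. repeat split; lra.
Qed.

Lemma lemma4p1_rhs_eq n m : INR n = 2 * m + 1 -> 1 <= m ->
  Rpower (2 * PI * exp 1 / (INR n - 1)) ((INR n - 1) / 2)
  * (3 * Qn n / (Rpower 2 (3 / 2) * exp (5 / 2) * (INR n - 2)))
  = 3 * sqrt PI / (sqrt 2 * exp (5 / 2))
    * (Qn n * Rpower PI (m - 1 / 2) * Rpower (exp 1 / m) m / (2 * (2 * m - 1))).
Proof.
  intros Hn Hm.
  assert (HP := PI_RGT_0).
  replace (2 * PI * exp 1 / (INR n - 1)) with (PI * (exp 1 / m)) by (rewrite Hn; field; lra).
  replace ((INR n - 1) / 2) with m by lra.
  replace (INR n - 2) with (2 * m - 1) by lra.
  rewrite <- Rpower_mult_distr by (try apply Rdiv_lt_0_compat; try apply exp_pos; lra).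
  replace (Rpower PI m) with (Rpower PI (m - 1 / 2) * sqrt PI)
    by (rewrite <- Rpower_add_half by lra; f_equal; field).
  replace (3 / 2) with (1 + 1 / 2) by field.
  rewrite Rpower_add_half, Rpower_1 by lra.
  assert (Hs2 : 0 < sqrt 2) by (apply sqrt_lt_R0; lra).
  assert (HE := exp_pos (5 / 2)).
  field. lra.
Qed.

Theorem lemma4p1 (n : nat) (hn : (3 <= n)%nat) :
  Kn n >=
  Rpower (2 * PI * exp 1 / (INR n - 1)) ((INR n - 1) / 2)
  * (3 * Qn n / (Rpower 2 (3 / 2) * exp (5 / 2) * (INR n - 2))).
Proof.
  pose (m := (INR n - 1) / 2).
  assert (Hn : INR n = 2 * m + 1) by (unfold m; field).
  assert (Hm : half_integer m).
  { exists (n - 2)%nat. unfold m. rewrite S_INR, minus_INR by lia. simpl. field. }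
  assert (Hm1 : 1 <= m) by (apply le_INR in hn; simpl in hn; lra).
  rewrite (Kn_eq_Gamma_stirling_ratio n m hn Hn), (lemma4p1_rhs_eq n m Hn Hm1).
  apply Rle_ge, Rmult_le_compat_r.
  - assert (HQ := Qn_pos n hn).
    assert (Hp : 0 < Rpower PI (m - 1 / 2)) by apply exp_pos.
    assert (HX : 0 < Rpower (exp 1 / m) m) by apply exp_pos.
    apply Rlt_le, Rdiv_lt_0_compat; [| lra].
    apply Rmult_lt_0_compat; [nra | exact HX].
  - apply Gamma_stirling_ratio_lower_bound; assumption.
Qed.
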